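(* Let $\mathcal K$ (UAVs) and $\mathcal I$ (subscribers) be finite sets. Fix $H>0$, $\sigma^2>0$, constants $\omega_{ij}>0$, transmit powers $p_j\ge0$ ($j\in\mathcal K$), subscriber positions $s_i\in\mathbb R^2$, and association indicators $c_{ik}\in\{0,1\}$ with $\sum_k c_{ik}\le 1$. Decision variables are UAV horizontal positions $q_j\in\mathbb R^2$ ($j\in\mathcal K$), reals $\eta_i$, and slack variables $b_{ij}>-H^2$ ($i\in\mathcal I$, $j\in\mathcal K$). With $h_{ij}(q)=\omega_{ij}/(H^2+\|q_j-s_i\|^2)$, consider the non-convex constraint $$\sum_{k}c_{ik}\log_2\Big(1+\frac{p_kh_{ik}(q)}{\sigma^2+\sum_{j\ne k}p_jh_{ij}(q)}\Big)\ge \eta_i. \qquad(\ast)$$ Fix a local point $q^{(r)}=(q^{(r)}_j)_{j\in\mathcal K}$ and define $d^{(r)}_{ij}=H^2+\|q^{(r)}_j-s_i\|^2$, $D^{(r)}_i=\log_2\big(\sigma^2+\sum_{j\in\mathcal K}p_j\omega_{ij}/d^{(r)}_{ij}\big)$, $E^{(r)}_{ij}=\dfrac{p_j\omega_{ij}}{(d^{(r)}_{ij})^2\,2^{D^{(r)}_i}\ln 2}$, and $\tilde\Lambda_{ik}(b)=-\log_2\big(\sigma^2+\sum_{j\ne k}\frac{p_j\omega_{ij}}{H^2+b_{ij}}\big)$. Consider the constraints $$\sum_k c_{ik}\Big(D^{(r)}_i-\sum_{j\in\mathcal K}E^{(r)}_{ij}\big(\|q_j-s_i\|^2-\|q^{(r)}_j-s_i\|^2\big)\Big)+\sum_kc_{ik}\tilde\Lambda_{ik}(b)\ge\eta_i\qquad(\ast\ast)$$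 and, for all $i\in\mathcal I$, $j\in\mathcal K$, $$-\|q^{(r)}_j-s_i\|^2+2(q^{(r)}_j-s_i)^{\mathrm T}(q_j-s_i)\ge b_{ij}.\qquad(\ast\ast\ast)$$ Then the set of $(q,\eta_i,b)$ (with $b_{ij}>-H^2$) satisfying $(\ast\ast)$ and $(\ast\ast\ast)$ is convex, and every such point satisfies $(\ast)$; i.e., $(\ast\ast)$–$(\ast\ast\ast)$ form a convex approximation of $(\ast)$ whose feasible set (projected onto $(q,\eta_i)$) is contained in that of $(\ast)$.
   Context: Setting: one time slot of a multi-UAV downlink where all UAVs fly at altitude $H$, UAV $j$ is at horizontal position $q_j$, subscriber $i$ at $s_i$ on the ground, the line-of-sight channel gain is $h_{ij}=\omega_{ij}/(H^2+\|q_j-s_i\|^2)$, and the left side of $(\ast)$ is subscriber $i$'s achievable rate under interference from the other UAVs. In the paper the slack $b_{ij}$ (written $B_{ij}(t)$) is introduced as a lower bound $b_{ij}\le\|q_j-s_i\|^2$, which $(\ast\ast\ast)$ replaces by its linearization at $q^{(r)}$. *)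

From HB Require Import structures.
From mathcomp Require Import all_boot all_order all_algebra.
From mathcomp Require Import all_classical all_reals.
From mathcomp Require Import exp.
Set Implicit Arguments. Unset Strict Implicit. Unset Printing Implicit Defensive.
Import Order.TTheory GRing.Theory Num.Theory.
Local Open Scope ring_scope.

Section UAV.
Variable R : realType.

Definition log2 (x : R) : R := ln x / ln 2.

Definition dot2 (u v : 'rV[R]_2) : R := \sum_(l < 2) u 0 l * v 0 l.
Definition sqn2 (u : 'rV[R]_2) : R := dot2 u u.

Variables (K I : finType) (H sigma2 : R) (omega : I -> K -> R) (p : K -> R)
  (s : I -> 'rV[R]_2) (c : I -> K -> R).

Definition gain (q : K -> 'rV[R]_2) (i : I) (j : K) : R :=
  omega i j / (H ^+ 2 + sqn2 (q j - s i)).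

Definition rate (q : K -> 'rV[R]_2) (i : I) : R :=
  \sum_(k : K) c i k *
    log2 (1 + p k * gain q i k / (sigma2 + \sum_(j : K | j != k) p j * gain q i j)).

Variable qr : K -> 'rV[R]_2.

Definition dr (i : I) (j : K) : R := H ^+ 2 + sqn2 (qr j - s i).
Definition Dr (i : I) : R := log2 (sigma2 + \sum_(j : K) p j * omega i j / dr i j).
Definition Er (i : I) (j : K) : R :=
  p j * omega i j / ((dr i j) ^+ 2 * (2 `^ (Dr i)) * ln 2).
Definition Lam (b : I -> K -> R) (i : I) (k : K) : R :=
  - log2 (sigma2 + \sum_(j : K | j != k) p j * omega i j / (H ^+ 2 + b i j)).

Definition cstr2 (i : I) (q : K -> 'rV[R]_2) (eta : R) (b : I -> K -> R) : Prop :=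
  \sum_(k : K) c i k *
     (Dr i - \sum_(j : K) Er i j * (sqn2 (q j - s i) - sqn2 (qr j - s i)))
  + \sum_(k : K) c i k * Lam b i k >= eta.

Definition cstr3 (q : K -> 'rV[R]_2) (b : I -> K -> R) : Prop :=
  forall (i' : I) (j : K),
    - sqn2 (qr j - s i') + 2 * dot2 (qr j - s i') (q j - s i') >= b i' j.

Definition approx_feasible (i : I) (q : K -> 'rV[R]_2) (eta : R) (b : I -> K -> R)
  : Prop :=
  (forall (i' : I) (j : K), b i' j > - H ^+ 2) /\ cstr2 i q eta b /\ cstr3 q b.

End UAV.

From HB Require Import structures.
From mathcomp Require Import all_boot all_order all_algebra.
From mathcomp Require Import all_classical all_reals.
From mathcomp Require Import interval_inference sequences convex exp.
From mathcomp Require Import ring lra.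
Set Implicit Arguments.
Unset Strict Implicit.
Unset Printing Implicit Defensive.

Import Order.TTheory GRing.Theory Num.Theory.
Local Open Scope ring_scope.

(* Everything rests on the convexity of f(d) = ln (sigma2 + \sum_j a_j / d_j) in
   d > 0 (for a_j >= 0).  Weighted AM-GM gives
     (t u + (1 - t) v)^-1 <= G^t G'^(1-t) (t / (u G) + (1 - t) / (v G')),
   and summing this against the a_j with G = sigma2 + \sum a_j / u_j and
   G' = sigma2 + \sum a_j / v_j (a Hoelder inequality) yields
   f (t u + (1 - t) v) <= t f u + (1 - t) f v.  Hence Lambda is concave in b, and
   the linearised term of (**), being f at d^(r) plus its gradient applied to
   d - d^(r) (up to the factor 1 / ln 2), is an affine minorant of the log2 of the
   total received power.  Constraint (***) bounds b_ij by the tangent at q^(r) of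
   the convex |q_j - s_i|^2, so b_ij <= |q_j - s_i|^2 and Lambda minorises minus
   the log2 of interference plus noise; the difference of the two logarithms is
   the rate.  Convexity of the feasible set follows from the convexity of
   |.|^2, the concavity of Lambda and the linearity of (***) in (q, b). *)

Section RealInequalities.
Variable R : realType.
Implicit Types t x y : R.

Lemma ln_le_subr1 {x : R} : 0 < x -> ln x <= x - 1.
Proof.
by move=> x0; have := @le_ln1Dx R (x - 1); rewrite [1 + _]addrC subrK; apply; lra.
Qed.

Lemma ln_concave {t x y : R} : 0 < x -> 0 < y -> 0 <= t <= 1 ->
  t * ln x + (1 - t) * ln y <= ln (t * x + (1 - t) * y).
Proof.
by move=> x0 y0 /andP[t0 t1]; exact: (@concave_ln R (Itv01 t0 t1) x y x0 y0).
Qed.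

Lemma mix_gt {m t x y : R} : m < x -> m < y -> 0 <= t <= 1 -> m < t * x + (1 - t) * y.
Proof.
move=> mx my /andP[]; rewrite le_eqVlt => /predU1P[<-|t_gt0] t1; first lra.
have : 0 < t * (x - m) by rewrite mulr_gt0 ?subr_gt0.
have : 0 <= (1 - t) * (y - m) by apply: mulr_ge0; lra.
nra.
Qed.

Lemma ler_mix {t x1 x2 y1 y2 : R} : 0 <= t <= 1 -> x1 <= y1 -> x2 <= y2 ->
  t * x1 + (1 - t) * x2 <= t * y1 + (1 - t) * y2.
Proof. by move=> /andP[t0 t1] h1 h2; rewrite lerD // ler_wpM2l // subr_ge0. Qed.

Definition geomean t x y := expR (t * ln x + (1 - t) * ln y).

Lemma ln_geomean t x y : ln (geomean t x y) = t * ln x + (1 - t) * ln y.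
Proof. exact: expRK. Qed.

Lemma geomean_gt0 t x y : 0 < geomean t x y.
Proof. exact: expR_gt0. Qed.

Lemma geomeanM t x y x' y' : 0 < x -> 0 < y -> 0 < x' -> 0 < y' ->
  geomean t (x * x') (y * y') = geomean t x y * geomean t x' y'.
Proof.
by move=> *; rewrite /geomean -expRD !lnM ?posrE //; congr expR; ring.
Qed.

Lemma geomean_le_mean {t x y : R} : 0 < x -> 0 < y -> 0 <= t <= 1 ->
  geomean t x y <= t * x + (1 - t) * y.
Proof.
move=> x0 y0 t01; rewrite -[leRHS]lnK ?posrE ?mix_gt // ler_expR.
exact: ln_concave.
Qed.

Lemma invr_mean_le_geomean {t x y : R} : 0 < x -> 0 < y -> 0 <= t <= 1 ->
  (t * x + (1 - t) * y)^-1 <= geomean t x^-1 y^-1.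
Proof.
move=> x0 y0 t01; have m0 : 0 < t * x + (1 - t) * y by exact: mix_gt.
rewrite -[leLHS]lnK ?posrE ?invr_gt0 // ler_expR !lnV ?posrE //.
by have := ln_concave x0 y0 t01; lra.
Qed.

Lemma invr_mean_le {t u v G G' : R} : 0 < u -> 0 < v -> 0 < G -> 0 < G' -> 0 <= t <= 1 ->
  (t * u + (1 - t) * v)^-1 <= geomean t G G' * (t / (u * G) + (1 - t) / (v * G')).
Proof.
move=> u0 v0 G0 G'0 t01; apply: (le_trans (invr_mean_le_geomean u0 v0 t01)).
have split_inv (x y : R) : 0 < y -> x^-1 = y * (x * y)^-1.
  by move=> y0; rewrite invfM mulrCA divff ?mulr1 ?gt_eqF.
rewrite (split_inv u G) // (split_inv v G') // geomeanM ?invr_gt0 ?mulr_gt0 //.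
apply: ler_wpM2l; first exact/ltW/geomean_gt0.
apply: geomean_le_mean => //; rewrite ?invr_gt0 ?mulr_gt0 //.
Qed.

Lemma sum_inv_mean_le_geomean {J : finType} (P : pred J) (sig : R) (a u v : J -> R) t :
  0 < sig -> (forall j, 0 <= a j) -> (forall j, 0 < u j) -> (forall j, 0 < v j) ->
  0 <= t <= 1 ->
  sig + \sum_(j | P j) a j / (t * u j + (1 - t) * v j) <=
  geomean t (sig + \sum_(j | P j) a j / u j) (sig + \sum_(j | P j) a j / v j).
Proof.
move=> sig0 a0 u0 v0 t01.
set S := \sum_(j | P j) a j / u j; set S' := \sum_(j | P j) a j / v j.
have G0 : 0 < sig + S.
  by apply: ltr_wpDr => //; apply: sumr_ge0 => j _; exact: divr_ge0 (a0 j) (ltW (u0 j)).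
have G'0 : 0 < sig + S'.
  by apply: ltr_wpDr => //; apply: sumr_ge0 => j _; exact: divr_ge0 (a0 j) (ltW (v0 j)).
set g := geomean t (sig + S) (sig + S').
have sig_le : sig <= sig * (g * (t / (1 * (sig + S)) + (1 - t) / (1 * (sig + S')))).
  rewrite -[leLHS]mulr1 ler_pM2l //.
  by have := invr_mean_le ltr01 ltr01 G0 G'0 t01; rewrite !mulr1 subrKC invr1.
have sum_le : \sum_(j | P j) a j / (t * u j + (1 - t) * v j) <=
    \sum_(j | P j) a j * (g * (t / (u j * (sig + S)) + (1 - t) / (v j * (sig + S')))).
  by apply: ler_sum => j _; rewrite ler_wpM2l ?invr_mean_le.
have sum_eq : \sum_(j | P j) a j * (g * (t / (u j * (sig + S)) + (1 - t) / (v j * (sig + S')))) =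
    g * t / (sig + S) * S + g * (1 - t) / (sig + S') * S'.
  rewrite /S /S' !mulr_sumr -big_split; apply: eq_bigr => j _ /=.
  by field; rewrite !gt_eqF.
have -> : g = sig * (g * (t / (1 * (sig + S)) + (1 - t) / (1 * (sig + S')))) +
    (g * t / (sig + S) * S + g * (1 - t) / (sig + S') * S').
  by field; rewrite !gt_eqF.
rewrite -sum_eq; exact: lerD.
Qed.

Lemma ln_sum_inv_convex {J : finType} (P : pred J) (sig : R) (a u v : J -> R) t :
  0 < sig -> (forall j, 0 <= a j) -> (forall j, 0 < u j) -> (forall j, 0 < v j) ->
  0 <= t <= 1 ->
  ln (sig + \sum_(j | P j) a j / (t * u j + (1 - t) * v j)) <=
  t * ln (sig + \sum_(j | P j) a j / u j) + (1 - t) * ln (sig + \sum_(j | P j) a j / v j).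
Proof.
move=> sig0 a0 u0 v0 t01; rewrite -ln_geomean ler_ln ?posrE ?geomean_gt0 //.
  exact: sum_inv_mean_le_geomean.
apply: ltr_wpDr => //; apply: sumr_ge0 => j _; apply: divr_ge0 => //.
exact/ltW/mix_gt.
Qed.

Lemma onem_le_ln_tangent {w z : R} : 0 < w -> 0 < z -> 1 - w <= ln z + (w * z)^-1 - 1.
Proof.
move=> w0 z0; have wz0 : 0 < (w * z)^-1 by rewrite invr_gt0 mulr_gt0.
have := ln_le_subr1 w0; have := ln_le_subr1 wz0.
by rewrite lnV ?lnM ?posrE ?mulr_gt0 //; lra.
Qed.

Lemma ln_sum_inv_tangent {J : finType} (sig : R) (a d d0 : J -> R) :
  0 < sig -> (forall j, 0 <= a j) -> (forall j, 0 < d j) -> (forall j, 0 < d0 j) ->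
  ln (sig + \sum_j a j / d0 j) +
    (\sum_j a j / d0 j * (1 - d j / d0 j)) / (sig + \sum_j a j / d0 j)
  <= ln (sig + \sum_j a j / d j).
Proof.
move=> sig0 a0 d_gt0 d0_gt0.
set S := \sum_j a j / d j; set S0 := \sum_j a j / d0 j.
have A0 : 0 < sig + S.
  by apply: ltr_wpDr => //; apply: sumr_ge0 => j _; exact: divr_ge0 (a0 j) (ltW (d_gt0 j)).
have A00 : 0 < sig + S0.
  by apply: ltr_wpDr => //; apply: sumr_ge0 => j _; exact: divr_ge0 (a0 j) (ltW (d0_gt0 j)).
set z := (sig + S) / (sig + S0); have z0 : 0 < z by exact: divr_gt0.
(* Termwise 1 - w <= ln z + (w z)^-1 - 1 with w = d_j / d0_j; the sigma term is w = 1. *)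
have sum_le : \sum_j a j / d0 j * (1 - d j / d0 j) <= (ln z - 1) * S0 + z^-1 * S.
  rewrite /S0 /S !mulr_sumr -big_split /=; apply: ler_sum => j _.
  have w0 : 0 < d j / d0 j by exact: divr_gt0.
  have -> : (ln z - 1) * (a j / d0 j) + z^-1 * (a j / d j) =
      a j / d0 j * (ln z + (d j / d0 j * z)^-1 - 1).
    by field; rewrite !gt_eqF.
  by apply: ler_wpM2l; [exact: divr_ge0 (a0 j) (ltW (d0_gt0 j)) | exact: onem_le_ln_tangent].
have sig_le : 0 <= sig * (ln z + z^-1 - 1).
  apply: mulr_ge0; first exact: ltW.
  by have := onem_le_ln_tangent ltr01 z0; rewrite mul1r; lra.
have balance : (ln z - 1) * S0 + z^-1 * S + sig * (ln z + z^-1 - 1) = (sig + S0) * ln z.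
  by rewrite /z invf_div; field; rewrite !gt_eqF.
have -> : ln (sig + S) = ln (sig + S0) + ln z by rewrite ln_div ?posrE // subrKC.
rewrite lerD2l ler_pdivrMr // mulrC; lra.
Qed.
End RealInequalities.

Section Log2.
Variable R : realType.

Lemma ln2_gt0 : 0 < ln (2 : R).
Proof. by rewrite ln_gt0 // ltr1n. Qed.

Lemma ler_log2 (x y : R) : 0 < x -> 0 < y -> (log2 x <= log2 y) = (x <= y).
Proof. by move=> x0 y0; rewrite /log2 ler_pM2r ?invr_gt0 ?ln2_gt0 // ler_ln. Qed.

Lemma log2_div (x y : R) : 0 < x -> 0 < y -> log2 (x / y) = log2 x - log2 y.
Proof. by move=> x0 y0; rewrite /log2 ln_div ?posrE // mulrBl. Qed.

Lemma log2K (x : R) : 0 < x -> 2 `^ log2 x = x.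
Proof.
move=> x0; rewrite -[LHS]lnK ?posrE ?powR_gt0 // ln_powR /log2.
by rewrite divfK ?gt_eqF ?ln2_gt0 // lnK.
Qed.
End Log2.

Section Plane.
Variable R : realType.
Implicit Types (u v w x y : 'rV[R]_2) (t : R).

Lemma dot2E u v : dot2 u v = u 0 0 * v 0 0 + u 0 1 * v 0 1.
Proof.
by rewrite /dot2 big_ord_recl big_ord1; congr (_ + u 0 _ * v 0 _); exact/val_inj.
Qed.

Lemma sqn2_ge0 u : 0 <= sqn2 u.
Proof. by rewrite /sqn2 dot2E addr_ge0 // -expr2 sqr_ge0. Qed.

Lemma dot2DZr w x y (a b : R) : dot2 w (a *: x + b *: y) = a * dot2 w x + b * dot2 w y.
Proof. by rewrite !dot2E !mxE; ring. Qed.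

Lemma sqn2_convex x y t : 0 <= t <= 1 ->
  sqn2 (t *: x + (1 - t) *: y) <= t * sqn2 x + (1 - t) * sqn2 y.
Proof.
move=> /andP[t0 t1]; rewrite /sqn2 !dot2E !mxE.
have t1t : 0 <= t * (1 - t) by apply: mulr_ge0; lra.
have := mulr_ge0 t1t (sqr_ge0 (x 0 0 - y 0 0)).
have := mulr_ge0 t1t (sqr_ge0 (x 0 1 - y 0 1)).
rewrite !expr2; nra.
Qed.

Lemma sqn2_tangent_le w x : - sqn2 w + 2 * dot2 w x <= sqn2 x.
Proof.
rewrite /sqn2 !dot2E.
have := sqr_ge0 (x 0 0 - w 0 0); have := sqr_ge0 (x 0 1 - w 0 1).
rewrite !expr2; nra.
Qed.
End Plane.

Lemma mix_subr (R : pzRingType) (V : lmodType R) (t : R) (x y z : V) :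
  t *: x + (1 - t) *: y - z = t *: (x - z) + (1 - t) *: (y - z).
Proof. by rewrite !scalerBr addrACA -opprD -scalerDl subrKC scale1r. Qed.

Section InnerConvexApproximation.
Variables (R : realType) (K I : finType) (H sigma2 : R) (omega : I -> K -> R)
  (p : K -> R) (s : I -> 'rV[R]_2) (c : I -> K -> R) (qr : K -> 'rV[R]_2) (i : I).
Hypotheses (H_gt0 : 0 < H) (sigma2_gt0 : 0 < sigma2)
  (omega_gt0 : forall i j, 0 < omega i j) (p_ge0 : forall j, 0 <= p j)
  (c_ge0 : forall k, 0 <= c i k).

Local Notation D := (Dr H sigma2 omega p s qr i).
Local Notation E := (Er H sigma2 omega p s qr i).
Local Notation d0 := (dr H s qr i).
Local Notation Lambda b := (Lam H sigma2 omega p b i).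
Local Notation feasible := (approx_feasible H sigma2 omega p s c qr i).
Local Notation h q := (gain H omega s q i).
Local Notation mix t x y := (t * x + (1 - t) * y).
Local Notation mixq t q1 q2 := (fun j => t *: q1 j + (1 - t) *: q2 j).
Local Notation mixb t b1 b2 := (fun i' j => t * b1 i' j + (1 - t) * b2 i' j).

Let pw j := p j * omega i j.
Let dist (q : K -> 'rV[R]_2) j := H ^+ 2 + sqn2 (q j - s i).

Let pw_ge0 j : 0 <= pw j.
Proof. exact/mulr_ge0/ltW/omega_gt0. Qed.

Let dist_gt0 q j : 0 < dist q j.
Proof. by apply: ltr_wpDr; [exact: sqn2_ge0 | exact: exprn_gt0]. Qed.

Let noise_sum_gt0 (P : pred K) {d : K -> R} : (forall j, 0 < d j) ->
  0 < sigma2 + \sum_(j | P j) pw j / d j.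
Proof.
move=> d_gt0; apply: ltr_wpDr => //; apply: sumr_ge0 => j _.
exact: divr_ge0 (pw_ge0 j) (ltW (d_gt0 j)).
Qed.

Lemma Er_ge0 j : 0 <= E j.
Proof.
apply: divr_ge0; first exact: pw_ge0.
apply: mulr_ge0; last exact/ltW/ln2_gt0.
exact: mulr_ge0 (sqr_ge0 _) (powR_ge0 _ _).
Qed.

Lemma exp2_Dr : 2 `^ D = sigma2 + \sum_j pw j / d0 j.
Proof. by rewrite log2K // noise_sum_gt0 // => j; exact: dist_gt0. Qed.

Lemma rate_termE q k :
  log2 (1 + p k * h q k / (sigma2 + \sum_(j | j != k) p j * h q j)) =
  log2 (sigma2 + \sum_j pw j / dist q j) - log2 (sigma2 + \sum_(j | j != k) pw j / dist q j).
Proof.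
have pw_h j : p j * h q j = pw j / dist q j by rewrite /gain mulrA.
have Bk_gt0 := noise_sum_gt0 (predC1 k) (dist_gt0 q).
under eq_bigr do rewrite pw_h.
rewrite pw_h -log2_div ?(noise_sum_gt0 _ (dist_gt0 q)) //; congr log2.
by rewrite [\sum_j _](bigD1 k) //=; field; rewrite !gt_eqF ?dist_gt0.
Qed.

Lemma Lam_le_interference q b k : cstr3 s qr q b -> (forall j, - H ^+ 2 < b i j) ->
  Lambda b k <= - log2 (sigma2 + \sum_(j | j != k) pw j / dist q j).
Proof.
move=> lin_b b_gt; have b_pos j : 0 < H ^+ 2 + b i j by have := b_gt j; lra.
rewrite /Lam lerN2 ler_log2 ?(noise_sum_gt0 _ b_pos) ?(noise_sum_gt0 _ (dist_gt0 q)) //.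
rewrite lerD2l; apply: ler_sum => j _; apply: ler_wpM2l; first exact: pw_ge0.
rewrite lef_pV2 ?posrE ?dist_gt0 // lerD2l.
by have := lin_b i j; have := sqn2_tangent_le (qr j - s i) (q j - s i); lra.
Qed.

Lemma linearization_le q :
  D - \sum_j E j * (sqn2 (q j - s i) - sqn2 (qr j - s i)) <=
  log2 (sigma2 + \sum_j pw j / dist q j).
Proof.
have d0_gt0 j : 0 < d0 j by exact: dist_gt0.
have A0_gt0 := noise_sum_gt0 xpredT d0_gt0.
set A0 := sigma2 + \sum_j pw j / d0 j in A0_gt0 *.
set T := \sum_j pw j / d0 j * (1 - dist q j / d0 j).
have -> : \sum_j E j * (sqn2 (q j - s i) - sqn2 (qr j - s i)) = - T / (A0 * ln 2).
  rewrite /T -sumrN mulr_suml; apply: eq_bigr => j _.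
  rewrite /Er exp2_Dr -/A0 /pw /dist /dr.
  by field; rewrite !gt_eqF ?ln2_gt0 ?(d0_gt0 j).
have -> : D = ln A0 / ln 2 by [].
have -> : ln A0 / ln 2 - - T / (A0 * ln 2) = (ln A0 + T / A0) / ln 2.
  by field; rewrite !gt_eqF ?ln2_gt0.
rewrite /log2 ler_pM2r ?invr_gt0 ?ln2_gt0 //.
exact: ln_sum_inv_tangent.
Qed.

Lemma rate_ge_of_feasible q eta b : feasible q eta b -> eta <= rate H sigma2 omega p s c q i.
Proof.
move=> [b_gt [lin_le lin_b]]; apply: (le_trans lin_le).
rewrite /rate -big_split /=; apply: ler_sum => k _.
rewrite -mulrDr ler_wpM2l // rate_termE.
by have := linearization_le q; have := Lam_le_interference k lin_b (b_gt i); lra.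
Qed.

Lemma linearized_concave q1 q2 t : 0 <= t <= 1 ->
  mix t (D - \sum_j E j * (sqn2 (q1 j - s i) - sqn2 (qr j - s i)))
        (D - \sum_j E j * (sqn2 (q2 j - s i) - sqn2 (qr j - s i))) <=
  D - \sum_j E j * (sqn2 (t *: q1 j + (1 - t) *: q2 j - s i) - sqn2 (qr j - s i)).
Proof.
move=> t01.
suff : \sum_j E j * (sqn2 (t *: q1 j + (1 - t) *: q2 j - s i) - sqn2 (qr j - s i)) <=
    mix t (\sum_j E j * (sqn2 (q1 j - s i) - sqn2 (qr j - s i)))
          (\sum_j E j * (sqn2 (q2 j - s i) - sqn2 (qr j - s i))) by lra.
rewrite !mulr_sumr -big_split /=; apply: ler_sum => j _.
have := sqn2_convex (q1 j - s i) (q2 j - s i) t01; rewrite -mix_subr.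
by move/(ler_wpM2l (Er_ge0 j)); lra.
Qed.

Lemma Lambda_concave b1 b2 t k :
  (forall j, - H ^+ 2 < b1 i j) -> (forall j, - H ^+ 2 < b2 i j) -> 0 <= t <= 1 ->
  mix t (Lambda b1 k) (Lambda b2 k) <= Lambda (mixb t b1 b2) k.
Proof.
move=> b1_gt b2_gt t01.
have u_gt0 j : 0 < H ^+ 2 + b1 i j by have := b1_gt j; lra.
have v_gt0 j : 0 < H ^+ 2 + b2 i j by have := b2_gt j; lra.
have ln2_inv : 0 <= (ln (2 : R))^-1 by rewrite invr_ge0; exact/ltW/ln2_gt0.
have := ln_sum_inv_convex (fun j => j != k) sigma2_gt0 pw_ge0 u_gt0 v_gt0 t01.
have -> : \sum_(j | j != k) pw j / mix t (H ^+ 2 + b1 i j) (H ^+ 2 + b2 i j) =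
    \sum_(j | j != k) pw j / (H ^+ 2 + mix t (b1 i j) (b2 i j)).
  by apply: eq_bigr => j _; congr (_ / _); ring.
move/(ler_wpM2r ln2_inv).
by rewrite /Lam /log2; lra.
Qed.

Lemma cstr3_mix q1 q2 b1 b2 t : 0 <= t <= 1 ->
  cstr3 s qr q1 b1 -> cstr3 s qr q2 b2 -> cstr3 s qr (mixq t q1 q2) (mixb t b1 b2).
Proof.
move=> t01 lin_b1 lin_b2 i' j /=; rewrite mix_subr dot2DZr.
set w := qr j - s i'.
have -> : - sqn2 w + 2 * mix t (dot2 w (q1 j - s i')) (dot2 w (q2 j - s i')) =
    mix t (- sqn2 w + 2 * dot2 w (q1 j - s i')) (- sqn2 w + 2 * dot2 w (q2 j - s i')).
  by ring.
exact: ler_mix.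
Qed.

Lemma cstr2_mix q1 q2 eta1 eta2 b1 b2 t : 0 <= t <= 1 ->
  (forall j, - H ^+ 2 < b1 i j) -> (forall j, - H ^+ 2 < b2 i j) ->
  cstr2 H sigma2 omega p s c qr i q1 eta1 b1 -> cstr2 H sigma2 omega p s c qr i q2 eta2 b2 ->
  cstr2 H sigma2 omega p s c qr i (mixq t q1 q2) (mix t eta1 eta2) (mixb t b1 b2).
Proof.
move=> t01 b1_gt b2_gt le1 le2; apply: (le_trans (ler_mix t01 le1 le2)).
rewrite !mulrDr addrACA !mulr_sumr -!big_split /=.
apply: ler_sum => k _; apply: lerD;
  rewrite mulrCA [(1 - t) * (c i k * _)]mulrCA -mulrDr ler_wpM2l //.
  exact: linearized_concave.
exact: Lambda_concave.
Qed.

Lemma feasible_mix q1 q2 eta1 eta2 b1 b2 t : 0 <= t <= 1 ->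
  feasible q1 eta1 b1 -> feasible q2 eta2 b2 ->
  feasible (mixq t q1 q2) (mix t eta1 eta2) (mixb t b1 b2).
Proof.
move=> t01 [b1_gt [le1 lin1]] [b2_gt [le2 lin2]]; split; [|split].
- by move=> i' j; exact: mix_gt.
- exact: cstr2_mix.
- exact: cstr3_mix.
Qed.

End InnerConvexApproximation.

Theorem proposition2 (R : realType) (K I : finType) (H sigma2 : R)
  (omega : I -> K -> R) (p : K -> R) (s : I -> 'rV[R]_2) (c : I -> K -> R)
  (qr : K -> 'rV[R]_2) :
  0 < H -> 0 < sigma2 ->
  (forall i j, 0 < omega i j) ->
  (forall j, 0 <= p j) ->
  (forall i k, c i k = 0 \/ c i k = 1) ->
  (forall i, \sum_(k : K) c i k <= 1) ->
  forall i : I,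
    (* convexity of the feasible set of the two approximating constraints with b_ij > -H^2 *)
    (forall (q1 q2 : K -> 'rV[R]_2) (eta1 eta2 : R) (b1 b2 : I -> K -> R) (t : R),
       0 <= t <= 1 ->
       approx_feasible H sigma2 omega p s c qr i q1 eta1 b1 ->
       approx_feasible H sigma2 omega p s c qr i q2 eta2 b2 ->
       approx_feasible H sigma2 omega p s c qr i
         (fun j => t *: q1 j + (1 - t) *: q2 j)
         (t * eta1 + (1 - t) * eta2)
         (fun i' j => t * b1 i' j + (1 - t) * b2 i' j))
    /\
    (* inner approximation: every feasible point satisfies the rate constraint *)
    (forall (q : K -> 'rV[R]_2) (eta : R) (b : I -> K -> R),
       approx_feasible H sigma2 omega p s c qr i q eta b ->
       rate H sigma2 omega p s c q i >= eta).
Proof.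
move=> H_gt0 sigma2_gt0 omega_gt0 p_ge0 c01 _ i.
have c_ge0 k : 0 <= c i k by case: (c01 i k) => ->; rewrite ?ler01.
split=> [q1 q2 eta1 eta2 b1 b2 t|q eta b]; first exact: feasible_mix.
exact: rate_ge_of_feasible.
Qed.
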